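(* Let $r\ge1$ and consider the linear program $\mathrm{LP}_r$ over $\mathbb K$ described in the context. For every $\lambda\in\mathbb R$, let $\boldsymbol\mu=t^\lambda$. Then the valuation of the primal part $(\mathbf u,\mathbf v,\mathbf z,\mathbf z',\mathbf h)$ of the point with parameter $\boldsymbol\mu$ of the Hardy central path of $\mathrm{LP}_r$ equals $(u(\lambda),v(\lambda),z(\lambda),z'(\lambda),h(\lambda))$. These are given by: $u_0(\lambda)=1$, $v_0(\lambda)=\min(2,\lambda)$; $(u_i(\lambda),v_i(\lambda))=\big(1+\min(u_{i-1}(\lambda),v_{i-1}(\lambda)),\,1-2^{-i}+\max(u_{i-1}(\lambda),v_{i-1}(\lambda))\big)$ for $1\le i\le r$; $z_0(\lambda)=1$, $h_0(\lambda)=2$; and $z_i(\lambda)=1+u_{i-1}(\lambda)$, $z'_i(\lambda)=1+v_{i-1}(\lambda)$, $h_i(\lambda)=v_i(\lambda)$ for $1\le i\le r$.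
   Context: $\mathbb K$ is the real closed field of germs at $+\infty$ of real functions definable in $\bar{\mathbb R}^{\mathbb R}$, the ordered real field expanded by the power functions $t\mapsto t^r$. It contains the germs $t^\alpha$. $\mathrm{val}(\mathbf f)=\lim_{t\to\infty}\log|\mathbf f(t)|/\log t$, applied entrywise. $\mathrm{LP}_r$ has decision variables $\mathbf x=(\mathbf u_0,\mathbf v_0,\dots,\mathbf u_r,\mathbf v_r)$ and slack variables $\mathbf w=(\mathbf z_0,\mathbf h_0,\mathbf z_1,\mathbf z'_1,\mathbf h_1,\dots,\mathbf z_r,\mathbf z'_r,\mathbf h_r)$, all required to be $\ge0$. The problem is: minimize $\mathbf v_0$ subject to - $\mathbf u_0+\mathbf z_0=t$ and $\mathbf v_0+\mathbf h_0=t^2$; - for $1\le i\le r$: $\mathbf u_i+\mathbf z_i=t\mathbf u_{i-1}$, $\mathbf u_i+\mathbf z'_i=t\mathbf v_{i-1}$, and $\mathbf v_i+\mathbf h_i=t^{1-2^{-i}}(\mathbf u_{i-1}+\mathbf v_{i-1})$. This is of the form: minimize $\mathbf c^T\mathbf x$ subject to $\mathbf A\mathbf x+\mathbf w=\mathbf b$, $\mathbf x,\mathbf w\ge0$, with $\mathbf c=e_{\mathbf v_0}$. It is strictly feasible and has bounded feasible set. For each positive $\boldsymbol\mu\in\mathbb K$, its Hardy central path point is the unique solution $(\mathbf x,\mathbf w,\mathbf y,\mathbf s)$ over $\mathbb K$ of $\mathbf A\mathbf x+\mathbf w=\mathbf b$, $-\mathbf A^T\mathbf y+\mathbf s=\mathbf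 c$, $\mathbf w_i\mathbf y_i=\mathbf x_j\mathbf s_j=\boldsymbol\mu$ for all $i,j$, $\mathbf x,\mathbf w,\mathbf y,\mathbf s>0$. Its primal part is $(\mathbf x,\mathbf w)$. *)

From Stdlib Require Import Reals Lra Lia Arith.
Open Scope R_scope.

Definition coef (t : R) (i : nat) : R := Rpower t (1 - / 2 ^ i).

(* (x, w, y, s) is the central path point of LP_r (with t a fixed real number)
   for parameter mu.
   Primal variables: u i, v i (0 <= i <= r).
   Slacks: z i (0 <= i <= r, row z_i), zp i (1 <= i <= r, row z'_i),
           h i (0 <= i <= r, row h_i).
   Dual variables y: yz i, yzp i, yh i (one per row / slack).
   Dual slacks s:   su i, sv i (one per column u_i, v_i).
   Equations: A x + w = b, -A^T y + s = c (c = e_{v_0}),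
              w_i y_i = mu, x_j s_j = mu, x,w,y,s > 0. *)
Definition central_point (r : nat) (t mu : R)
  (u v z zp h yz yzp yh su sv : nat -> R) : Prop :=
  u 0%nat + z 0%nat = t /\
  v 0%nat + h 0%nat = t ^ 2 /\
  (forall i, (1 <= i <= r)%nat ->
     u i + z i = t * u (i - 1)%nat /\
     u i + zp i = t * v (i - 1)%nat /\
     v i + h i = coef t i * (u (i - 1)%nat + v (i - 1)%nat)) /\
  (forall j, (j <= r)%nat ->
     su j = (if Nat.eqb j 0 then yz 0%nat else yz j + yzp j)
            - (if Nat.ltb j r then t * yz (S j) + coef t (S j) * yh (S j) else 0) /\
     sv j = (if Nat.eqb j 0 then 1 else 0) + yh j
            - (if Nat.ltb j r then t * yzp (S j) + coef t (S j) * yh (S j) else 0)) /\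
  (forall i, (i <= r)%nat ->
     0 < u i /\ 0 < v i /\ 0 < su i /\ 0 < sv i /\
     u i * su i = mu /\ v i * sv i = mu /\
     0 < z i /\ 0 < yz i /\ z i * yz i = mu /\
     0 < h i /\ 0 < yh i /\ h i * yh i = mu) /\
  (forall i, (1 <= i <= r)%nat ->
     0 < zp i /\ 0 < yzp i /\ zp i * yzp i = mu).

Definition has_val (f : R -> R) (a : R) : Prop :=
  forall eps, 0 < eps -> exists T, forall t, T < t ->
    Rabs (ln (Rabs (f t)) / ln t - a) < eps.

Fixpoint uv_val (lam : R) (i : nat) : R * R :=
  match i with
  | O => (1, Rmin 2 lam)
  | S k => let p := uv_val lam k in
           (1 + Rmin (fst p) (snd p), 1 - / 2 ^ (S k) + Rmax (fst p) (snd p))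
  end.

Definition u_val (lam : R) (i : nat) : R := fst (uv_val lam i).
Definition v_val (lam : R) (i : nat) : R := snd (uv_val lam i).
Definition z_val (lam : R) (i : nat) : R :=
  match i with O => 1 | S k => 1 + u_val lam k end.
Definition zp_val (lam : R) (i : nat) : R := 1 + v_val lam (i - 1).
Definition h_val (lam : R) (i : nat) : R :=
  match i with O => 2 | S _ => v_val lam i end.

From Stdlib Require Import Reals Lra Lia.
Open Scope R_scope.

(* Along the central path, [x_j s_j = w_i y_i = mu], so for any feasible point [x'] whose objective
   is at most [v_0] the pairing [s^T x' + y^T w'] is at most the duality gap, which is below [5(r+1) mu];
   hence every coordinate of [x'] and of its slack [w'] is at most [5(r+1)] times the corresponding
   central one.  For a fixed [v_0] the coordinatewise largest feasible points are obtained greedily,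
   [u_i = t min(u_{i-1}, v_{i-1})] and [v_i = t^(1-2^-i) (u_{i-1} + v_{i-1})], truncated to zero after a
   given index; feasibility alone gives the reverse inequalities.  So every primal coordinate is within
   a constant factor of a min/plus/times expression in [t] and [v_0], while [v_0] itself is within a
   constant factor of [min(t^2, mu)].  Valuations of such expressions obey the tropical rules
   [min, max, +], which is the recursion defining [u(lam)] and [v(lam)]. *)

Definition eventually (P : R -> Prop) : Prop := exists T, forall t, T < t -> P t.

Lemma eventually_gt (a : R) : eventually (fun t => a < t).
Proof. exists a; auto. Qed.

Lemma eventually_mono (P Q : R -> Prop) :
  (forall t, P t -> Q t) -> eventually P -> eventually Q.
Proof. intros HPQ [T H]. exists T. auto. Qed.

Lemma eventually_mono2 (P Q S : R -> Prop) :
  (forall t, P t -> Q t -> S t) -> eventually P -> eventually Q -> eventually S.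
Proof.
  intros HS [T1 H1] [T2 H2]. exists (Rmax T1 T2). intros t Ht.
  pose proof (Rmax_l T1 T2); pose proof (Rmax_r T1 T2).
  apply HS; [apply H1 | apply H2]; lra.
Qed.

Definition within_factor (K x y : R) : Prop :=
  0 < x /\ 0 < y /\ x <= K * y /\ y <= K * x.

Lemma within_factor_of_le K x y : 1 <= K -> 0 < x -> x <= y -> y <= K * x -> within_factor K x y.
Proof. intros. repeat split; nra. Qed.

Lemma within_factor_ge1 K x y : within_factor K x y -> 1 <= K.
Proof. intros (Hx & Hy & Hxy & Hyx). nra. Qed.

Lemma within_factor_mono K K' x y :
  K <= K' -> within_factor K x y -> within_factor K' x y.
Proof. intros HK (Hx & Hy & Hxy & Hyx). repeat split; nra. Qed.

Lemma within_factor_trans K1 K2 x y z :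
  within_factor K1 x y -> within_factor K2 y z -> within_factor (K1 * K2) x z.
Proof.
  intros H1 H2. pose proof (within_factor_ge1 _ _ _ H1).
  pose proof (within_factor_ge1 _ _ _ H2).
  destruct H1 as (Hx & Hy & Hxy & Hyx), H2 as (_ & Hz & Hyz & Hzy).
  repeat split; nra.
Qed.

Lemma within_factor_mult K1 K2 x1 y1 x2 y2 :
  within_factor K1 x1 y1 -> within_factor K2 x2 y2 ->
  within_factor (K1 * K2) (x1 * x2) (y1 * y2).
Proof.
  intros H1 H2. pose proof (within_factor_ge1 _ _ _ H1).
  pose proof (within_factor_ge1 _ _ _ H2).
  destruct H1 as (Hx1 & Hy1 & H1 & H1'), H2 as (Hx2 & Hy2 & H2 & H2').
  repeat split; nra.
Qed.

Lemma within_factor_min K x1 y1 x2 y2 :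
  within_factor K x1 y1 -> within_factor K x2 y2 ->
  within_factor K (Rmin x1 x2) (Rmin y1 y2).
Proof.
  intros (Hx1 & Hy1 & H1 & H1') (Hx2 & Hy2 & H2 & H2').
  unfold Rmin; repeat destruct Rle_dec; repeat split; lra.
Qed.

Lemma within_factor_plus K x1 y1 x2 y2 :
  within_factor K x1 y1 -> within_factor K x2 y2 ->
  within_factor K (x1 + x2) (y1 + y2).
Proof. intros (Hx1 & Hy1 & H1 & H1') (Hx2 & Hy2 & H2 & H2'). repeat split; lra. Qed.

Definition same_order (f g : R -> R) : Prop :=
  exists K, eventually (fun t => within_factor K (f t) (g t)).

Lemma same_order_trans f g h : same_order f g -> same_order g h -> same_order f h.
Proof.
  intros [K1 H1] [K2 H2]. exists (K1 * K2).
  revert H1 H2; apply eventually_mono2; intros t; apply within_factor_trans.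
Qed.

Lemma same_order_mult f1 g1 f2 g2 :
  same_order f1 g1 -> same_order f2 g2 ->
  same_order (fun t => f1 t * f2 t) (fun t => g1 t * g2 t).
Proof.
  intros [K1 H1] [K2 H2]. exists (K1 * K2).
  revert H1 H2; apply eventually_mono2; intros t; apply within_factor_mult.
Qed.

Lemma same_order_min f1 g1 f2 g2 :
  same_order f1 g1 -> same_order f2 g2 ->
  same_order (fun t => Rmin (f1 t) (f2 t)) (fun t => Rmin (g1 t) (g2 t)).
Proof.
  intros [K1 H1] [K2 H2]. exists (Rmax K1 K2).
  revert H1 H2; apply eventually_mono2; intros t H1 H2.
  apply within_factor_min; [apply (within_factor_mono K1) | apply (within_factor_mono K2)];
    auto using Rmax_l, Rmax_r.
Qed.

Lemma same_order_plus f1 g1 f2 g2 :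
  same_order f1 g1 -> same_order f2 g2 ->
  same_order (fun t => f1 t + f2 t) (fun t => g1 t + g2 t).
Proof.
  intros [K1 H1] [K2 H2]. exists (Rmax K1 K2).
  revert H1 H2; apply eventually_mono2; intros t H1 H2.
  apply within_factor_plus; [apply (within_factor_mono K1) | apply (within_factor_mono K2)];
    auto using Rmax_l, Rmax_r.
Qed.

Lemma same_order_of_eventually_eq f g :
  eventually (fun t => 0 < f t /\ f t = g t) -> same_order f g.
Proof.
  intros H. exists 1. revert H; apply eventually_mono; intros t [Hf <-].
  repeat split; lra.
Qed.

Definition theta (f : R -> R) (e : R) : Prop := same_order f (fun t => Rpower t e).

Lemma Rpower_gt_0 t e : 0 < Rpower t e.
Proof. apply exp_pos. Qed.

Lemma theta_Rpower e : theta (fun t => Rpower t e) e.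
Proof.
  exists 1. exists 0. intros t _. pose proof (Rpower_gt_0 t e). repeat split; lra.
Qed.

Lemma theta_id : theta (fun t => t) 1.
Proof.
  apply same_order_of_eventually_eq.
  apply (eventually_mono (fun t => 0 < t)); [|apply eventually_gt].
  intros t Ht. rewrite Rpower_1; auto.
Qed.

Lemma theta_sqr : theta (fun t => t ^ 2) 2.
Proof.
  apply same_order_of_eventually_eq.
  apply (eventually_mono (fun t => 0 < t)); [|apply eventually_gt].
  intros t Ht. split; [apply pow_lt; exact Ht|].
  rewrite <- (Rpower_pow 2 t Ht). simpl INR. f_equal; ring.
Qed.

Lemma theta_mult f g a b : theta f a -> theta g b -> theta (fun t => f t * g t) (a + b).
Proof.
  intros Hf Hg. apply (same_order_trans _ _ _ (same_order_mult _ _ _ _ Hf Hg)).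
  apply same_order_of_eventually_eq. exists 0. intros t _.
  rewrite Rpower_plus. split; [apply Rmult_lt_0_compat|]; auto using Rpower_gt_0.
Qed.

Lemma theta_min f g a b : theta f a -> theta g b -> theta (fun t => Rmin (f t) (g t)) (Rmin a b).
Proof.
  intros Hf Hg. apply (same_order_trans _ _ _ (same_order_min _ _ _ _ Hf Hg)).
  apply same_order_of_eventually_eq. exists 1. intros t Ht.
  split; [unfold Rmin; destruct Rle_dec; apply Rpower_gt_0|].
  unfold Rmin at 2. destruct Rle_dec.
  - apply Rmin_left, Rle_Rpower; lra.
  - apply Rmin_right, Rle_Rpower; lra.
Qed.

Lemma theta_plus f g a b : theta f a -> theta g b -> theta (fun t => f t + g t) (Rmax a b).
Proof.
  intros Hf Hg. apply (same_order_trans _ (fun t => Rpower t a + Rpower t b)).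
  - exact (same_order_plus _ _ _ _ Hf Hg).
  - exists 2, 1. intros t Ht.
    pose proof (Rpower_gt_0 t a). pose proof (Rpower_gt_0 t b).
    assert (Ha : Rpower t a <= Rpower t (Rmax a b)) by (apply Rle_Rpower, Rmax_l; lra).
    assert (Hb : Rpower t b <= Rpower t (Rmax a b)) by (apply Rle_Rpower, Rmax_r; lra).
    assert (Hab : Rpower t (Rmax a b) = Rpower t a \/ Rpower t (Rmax a b) = Rpower t b)
      by (unfold Rmax; destruct Rle_dec; auto).
    repeat split; lra.
Qed.

(* [ln f / ln t] stays within [ln K / ln t] of [e], and [ln t] eventually exceeds [ln K / eps]. *)
Lemma theta_has_val f e : theta f e -> has_val f e.
Proof.
  intros [K [T HK]] eps Heps.
  exists (Rmax (Rmax T 1) (exp (ln K / eps))). intros t Ht.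
  pose proof (Rmax_l T 1). pose proof (Rmax_r T 1).
  pose proof (Rmax_l (Rmax T 1) (exp (ln K / eps))).
  pose proof (Rmax_r (Rmax T 1) (exp (ln K / eps))).
  assert (Hw : within_factor K (f t) (Rpower t e)) by (apply HK; lra).
  pose proof (within_factor_ge1 _ _ _ Hw) as HK1.
  destruct Hw as (Hf & Hp & Hfp & Hpf).
  assert (Hlnt : 0 < ln t) by (rewrite <- ln_1; apply ln_increasing; lra).
  assert (HlnK : ln K < eps * ln t).
  { assert (Hlt : ln (exp (ln K / eps)) < ln t) by (apply ln_increasing; [apply exp_pos | lra]).
    rewrite ln_exp in Hlt. apply (Rmult_lt_compat_l eps) in Hlt; [|lra].
    replace (eps * (ln K / eps)) with (ln K) in Hlt by (field; lra). lra. }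
  assert (ln_le : forall x y, 0 < x -> x <= y -> ln x <= ln y).
  { intros x y Hx [Hxy | <-]; [left; apply ln_increasing |]; lra. }
  assert (Hup : ln (f t) <= ln K + e * ln t).
  { rewrite <- ln_Rpower, <- ln_mult by lra. apply ln_le; lra. }
  assert (Hlo : e * ln t <= ln K + ln (f t)).
  { rewrite <- ln_Rpower, <- ln_mult by lra. apply ln_le; lra. }
  rewrite (Rabs_right (f t)) by lra.
  replace (ln (f t) / ln t - e) with ((ln (f t) - e * ln t) / ln t) by (field; lra).
  apply Rabs_def1.
  - apply (Rmult_lt_reg_r (ln t)); [lra|]. unfold Rdiv. rewrite Rmult_assoc, Rinv_l; lra.
  - apply (Rmult_lt_reg_r (ln t)); [lra|]. unfold Rdiv. rewrite Rmult_assoc, Rinv_l; lra.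
Qed.

(* The slacks [b - A x] of LP_r at the point [(u, v)]; there is no row [z'_0], so [zp_of _ _ _ 0] is a dummy [0]. *)
Definition z_of (t : R) (u : nat -> R) (i : nat) : R :=
  match i with O => t - u O | S m => t * u m - u (S m) end.

Definition zp_of (t : R) (u v : nat -> R) (i : nat) : R :=
  match i with O => 0 | S m => t * v m - u (S m) end.

Definition h_of (t : R) (u v : nat -> R) (i : nat) : R :=
  match i with O => t ^ 2 - v O | S m => coef t (S m) * (u m + v m) - v (S m) end.

Definition admissible (t : R) (u v : nat -> R) : Prop :=
  forall i, 0 <= u i /\ 0 <= v i /\
    0 <= z_of t u i /\ 0 <= zp_of t u v i /\ 0 <= h_of t u v i.

Definition trunc (k : nat) (f : nat -> R) (i : nat) : R := if (i <? k)%nat then f i else 0.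

Lemma trunc_lt k f i : (i < k)%nat -> trunc k f i = f i.
Proof. intros H. unfold trunc. destruct (Nat.ltb_spec i k); [reflexivity | lia]. Qed.

Lemma coef_pos t i : 0 < coef t i.
Proof. apply exp_pos. Qed.

(* Zeroing [(u_i, v_i)] for [i >= k] only enlarges the slacks of row [k] and empties the later rows. *)
Lemma admissible_trunc t u v k :
  0 <= t -> admissible t u v -> admissible t (trunc k u) (trunc k v).
Proof.
  intros Ht Hadm i.
  destruct (Hadm i) as (Hu & Hv & Hz & Hzp & Hh).
  destruct i as [|m]; simpl in *; unfold trunc.
  - destruct (Nat.ltb_spec 0 k); repeat split; lra.
  - destruct (Hadm m) as (Hum & Hvm & _). pose proof (coef_pos t (S m)).
    destruct (Nat.ltb_spec m k), (Nat.ltb_spec (S m) k); try lia; repeat split; nra.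
Qed.

Fixpoint greedy (t a : R) (i : nat) : R * R :=
  match i with
  | O => (t, a)
  | S k => let p := greedy t a k in
           (t * Rmin (fst p) (snd p), coef t (S k) * (fst p + snd p))
  end.

Definition greedy_u (t a : R) (i : nat) : R := fst (greedy t a i).
Definition greedy_v (t a : R) (i : nat) : R := snd (greedy t a i).

Lemma greedy_u_S t a m :
  greedy_u t a (S m) = t * Rmin (greedy_u t a m) (greedy_v t a m).
Proof. reflexivity. Qed.

Lemma greedy_v_S t a m :
  greedy_v t a (S m) = coef t (S m) * (greedy_u t a m + greedy_v t a m).
Proof. reflexivity. Qed.

Definition greedy_z (t a : R) (i : nat) : R :=
  match i with O => t | S m => t * greedy_u t a m end.
Definition greedy_zp (t a : R) (i : nat) : R := t * greedy_v t a (i - 1).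
Definition greedy_h (t a : R) (i : nat) : R :=
  match i with O => t ^ 2 | S _ => greedy_v t a i end.

Lemma greedy_pos t a i : 0 < t -> 0 < a -> 0 < greedy_u t a i /\ 0 < greedy_v t a i.
Proof.
  intros Ht Ha. induction i as [|i [IHu IHv]]; [split; assumption|].
  rewrite greedy_u_S, greedy_v_S. pose proof (coef_pos t (S i)). split.
  - apply Rmult_lt_0_compat; [lra|]. unfold Rmin; destruct Rle_dec; lra.
  - apply Rmult_lt_0_compat; lra.
Qed.

Lemma greedy_admissible t a : 0 < t -> 0 < a <= t ^ 2 ->
  admissible t (greedy_u t a) (greedy_v t a).
Proof.
  intros Ht Ha i. pose proof (greedy_pos t a i Ht (proj1 Ha)) as [Hu Hv].
  destruct i as [|m]; simpl.
  - unfold greedy_u, greedy_v in *; simpl in *. repeat split; lra.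
  - rewrite greedy_u_S, greedy_v_S in *.
    pose proof (Rmin_l (greedy_u t a m) (greedy_v t a m)).
    pose proof (Rmin_r (greedy_u t a m) (greedy_v t a m)).
    repeat split; nra.
Qed.

Lemma greedy_slacks_trunc t a i :
  z_of t (trunc i (greedy_u t a)) i = greedy_z t a i /\
  h_of t (trunc i (greedy_u t a)) (trunc i (greedy_v t a)) i = greedy_h t a i /\
  ((1 <= i)%nat ->
   zp_of t (trunc i (greedy_u t a)) (trunc i (greedy_v t a)) i = greedy_zp t a i).
Proof.
  destruct i as [|m]; simpl.
  - unfold trunc; simpl. repeat split; [ring | ring | lia].
  - unfold trunc, greedy_zp. simpl. rewrite Nat.sub_0_r.
    destruct (Nat.ltb_spec m (S m)), (Nat.ltb_spec (S m) (S m)); try lia.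
    rewrite greedy_v_S. repeat split; [ring | ring | intros; ring].
Qed.

Lemma sum_f_R0_ge_term (f : nat -> R) n j :
  (forall i, (i <= n)%nat -> 0 <= f i) -> (j <= n)%nat -> f j <= sum_f_R0 f n.
Proof.
  intros Hf Hj. induction n as [|n IH]; simpl.
  - replace j with 0%nat by lia. lra.
  - pose proof (Hf (S n) (le_n _)).
    destruct (Nat.eq_dec j (S n)) as [-> | Hne].
    + assert (0 <= sum_f_R0 f n).
      { rewrite <- (Rmult_0_l (INR (S n))), <- sum_cte.
        apply sum_Rle. intros i Hi. apply Hf. lia. }
      lra.
    + assert (f j <= sum_f_R0 f n) by (apply IH; [intros; apply Hf|]; lia). lra.
Qed.

Lemma le_of_complementary s x a K mu : 0 < s -> x * s = mu -> s * a <= K * mu -> a <= K * x.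
Proof. intros Hs <- H. apply (Rmult_le_reg_l s); nra. Qed.

(* Bounds the number [5 r + 4] of complementary pairs of LP_r. *)
Definition pair_bound (r : nat) : R := 5 * INR (S r).

Lemma pair_bound_ge1 r : 1 <= pair_bound r.
Proof. unfold pair_bound. rewrite S_INR. pose proof (pos_INR r). lra. Qed.

Section CentralPoint.

Variables (r : nat) (t mu : R) (u v z zp h yz yzp yh su sv : nat -> R).
Hypothesis Hcp : central_point r t mu u v z zp h yz yzp yh su sv.

Lemma central_slacks i : (i <= r)%nat ->
  z i = z_of t u i /\ h i = h_of t u v i /\ ((1 <= i)%nat -> zp i = zp_of t u v i).
Proof.
  destruct Hcp as (H0 & H1 & Hrow & _). intros Hi. destruct i as [|m]; simpl.
  - repeat split; [lra | lra | lia].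
  - destruct (Hrow (S m) ltac:(lia)) as (Hz & Hzp & Hh). simpl in Hz, Hzp, Hh.
    rewrite Nat.sub_0_r in Hz, Hzp, Hh. repeat split; lra.
Qed.

Lemma central_mu_pos : 0 < mu.
Proof.
  destruct Hcp as (_ & _ & _ & _ & Hpos & _).
  destruct (Hpos O (Nat.le_0_l r)) as (Hu & _ & Hsu & _ & <- & _).
  apply Rmult_lt_0_compat; assumption.
Qed.

(* The [j]-th block of the pairing [s^T x' + y^T (b - A x')] of the dual part with a point [x' = (u', v')]. *)
Definition pairing (u' v' : nat -> R) (j : nat) : R :=
  su j * u' j + sv j * v' j + yz j * z_of t u' j +
  yzp j * zp_of t u' v' j + yh j * h_of t u' v' j.

Lemma pairing_partial_sum u' v' k : (k <= r)%nat ->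
  sum_f_R0 (pairing u' v') k = v' O + yz O * t + yh O * t ^ 2 -
    (if (k <? r)%nat
     then (t * yz (S k) + coef t (S k) * yh (S k)) * u' k +
          (t * yzp (S k) + coef t (S k) * yh (S k)) * v' k
     else 0).
Proof.
  destruct Hcp as (_ & _ & _ & Hdual & _).
  induction k as [|k IH]; intros Hk; simpl sum_f_R0.
  - destruct (Hdual O Hk) as [Hsu Hsv]. unfold pairing. rewrite Hsu, Hsv. simpl.
    destruct (0 <? r)%nat; ring.
  - rewrite IH by lia. destruct (Hdual (S k) Hk) as [Hsu Hsv].
    unfold pairing. rewrite Hsu, Hsv. simpl.
    destruct (Nat.ltb_spec k r); [|lia]. destruct (S k <? r)%nat; ring.
Qed.

Lemma pairing_sum u' v' :
  sum_f_R0 (pairing u' v') r = v' O + yz O * t + yh O * t ^ 2.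
Proof. rewrite pairing_partial_sum, Nat.ltb_irrefl by lia. ring. Qed.

Lemma central_duality_gap_le : v O + yz O * t + yh O * t ^ 2 <= pair_bound r * mu.
Proof.
  destruct Hcp as (_ & _ & _ & _ & Hpos & Hposp).
  rewrite <- (pairing_sum u v). unfold pair_bound.
  replace (5 * INR (S r) * mu) with (5 * mu * INR (S r)) by ring.
  rewrite <- sum_cte. apply sum_Rle. intros j Hj.
  destruct (central_slacks j Hj) as (Hz & Hh & Hzp).
  destruct (Hpos j Hj) as (_ & _ & _ & _ & Hus & Hvs & _ & _ & Hzy & _ & _ & Hhy).
  pose proof central_mu_pos.
  unfold pairing. rewrite <- Hz, <- Hh. destruct j as [|m].
  - simpl. lra.
  - destruct (Hposp (S m) ltac:(lia)) as (_ & _ & Hzpy). rewrite <- Hzp by lia. lra.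
Qed.

(* Each pairing block of an admissible point is nonnegative and their sum is the duality gap,
   at most that of the central point when [v'_0 <= v_0]. *)
Lemma central_dominates u' v' : admissible t u' v' -> v' O <= v O ->
  forall j, (j <= r)%nat ->
    u' j <= pair_bound r * u j /\ v' j <= pair_bound r * v j /\
    z_of t u' j <= pair_bound r * z j /\ h_of t u' v' j <= pair_bound r * h j /\
    ((1 <= j)%nat -> zp_of t u' v' j <= pair_bound r * zp j).
Proof.
  intros Hadm Hv0 j Hj. pose proof Hcp as (_ & _ & _ & _ & Hpos & Hposp).
  assert (Hblock : forall i, (i <= r)%nat ->
    0 <= su i * u' i /\ 0 <= sv i * v' i /\ 0 <= yz i * z_of t u' i /\
    0 <= yzp i * zp_of t u' v' i /\ 0 <= yh i * h_of t u' v' i).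
  { intros i Hi. destruct (Hadm i) as (Hu & Hv & Hz & Hzp & Hh).
    destruct (Hpos i Hi) as (_ & _ & Hsu & Hsv & _ & _ & _ & Hyz & _ & _ & Hyh & _).
    assert (0 <= yzp i * zp_of t u' v' i).
    { destruct i as [|m]; [simpl; lra|].
      destruct (Hposp (S m) ltac:(lia)) as (_ & Hyzp & _). nra. }
    repeat split; auto; nra. }
  assert (Hgap : pairing u' v' j <= pair_bound r * mu).
  { apply (Rle_trans _ (sum_f_R0 (pairing u' v') r)).
    - apply sum_f_R0_ge_term; auto. intros i Hi.
      destruct (Hblock i Hi) as (? & ? & ? & ? & ?). unfold pairing. lra.
    - rewrite pairing_sum. pose proof central_duality_gap_le.
      destruct (Hpos O (Nat.le_0_l r)) as (_ & _ & _ & _ & _ & _ & _ & Hyz & _ & _ & Hyh & _).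
      nra. }
  destruct (Hblock j Hj) as (Bu & Bv & Bz & Bzp & Bh).
  destruct (Hpos j Hj) as (_ & _ & Hsu & Hsv & Hus & Hvs & _ & Hyz & Hzy & _ & Hyh & Hhy).
  unfold pairing in Hgap. repeat split.
  - apply (le_of_complementary (su j) _ _ _ mu); lra.
  - apply (le_of_complementary (sv j) _ _ _ mu); lra.
  - apply (le_of_complementary (yz j) _ _ _ mu); lra.
  - apply (le_of_complementary (yh j) _ _ _ mu); lra.
  - intros Hj1. destruct (Hposp j (conj Hj1 Hj)) as (_ & Hyzp & Hzpy).
    apply (le_of_complementary (yzp j) _ _ _ mu); lra.
Qed.

Lemma central_le_greedy (Ht : 0 < t) i : (i <= r)%nat ->
  u i <= greedy_u t (v O) i /\ v i <= greedy_v t (v O) i.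
Proof.
  pose proof Hcp as (_ & _ & _ & _ & Hpos & Hposp).
  induction i as [|i IH]; intros Hi.
  - destruct (central_slacks O Hi) as (Hz & _).
    destruct (Hpos O Hi) as (_ & _ & _ & _ & _ & _ & Hz0 & _). simpl in Hz.
    unfold greedy_u, greedy_v; simpl. lra.
  - destruct (IH ltac:(lia)) as [Hu Hv]. rewrite greedy_u_S, greedy_v_S.
    destruct (central_slacks (S i) Hi) as (Hz & Hh & Hzp). simpl in Hz, Hh, Hzp.
    specialize (Hzp ltac:(lia)).
    destruct (Hpos (S i) Hi) as (_ & _ & _ & _ & _ & _ & Hz1 & _ & _ & Hh1 & _).
    destruct (Hposp (S i) ltac:(lia)) as (Hzp1 & _).
    pose proof (coef_pos t (S i)). split.
    + unfold Rmin. destruct Rle_dec; nra.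
    + nra.
Qed.

Lemma central_slacks_le_greedy (Ht : 0 < t) i : (i <= r)%nat ->
  z i <= greedy_z t (v O) i /\ h i <= greedy_h t (v O) i /\
  ((1 <= i)%nat -> zp i <= greedy_zp t (v O) i).
Proof.
  pose proof Hcp as (_ & _ & _ & _ & Hpos & _).
  intros Hi. destruct (central_slacks i Hi) as (Hz & Hh & Hzp).
  destruct i as [|m]; simpl in Hz, Hh, Hzp |- *.
  - destruct (Hpos O Hi) as (Hu & Hv & _). repeat split; [lra | lra | lia].
  - destruct (central_le_greedy Ht m ltac:(lia)) as [Hu Hv].
    destruct (Hpos (S m) Hi) as (Hu1 & Hv1 & _).
    unfold greedy_zp. simpl. rewrite Nat.sub_0_r, greedy_v_S.
    pose proof (coef_pos t (S m)).
    assert (t * u m <= t * greedy_u t (v O) m) by (apply Rmult_le_compat_l; lra).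
    assert (t * v m <= t * greedy_v t (v O) m) by (apply Rmult_le_compat_l; lra).
    assert (coef t (S m) * (u m + v m) <=
            coef t (S m) * (greedy_u t (v O) m + greedy_v t (v O) m))
      by (apply Rmult_le_compat_l; lra).
    rewrite Hz, Hh, Hzp by lia. repeat split; intros; lra.
Qed.

Lemma central_within_greedy (Ht : 0 < t) i : (i <= r)%nat ->
  within_factor (pair_bound r) (u i) (greedy_u t (v O) i) /\
  within_factor (pair_bound r) (v i) (greedy_v t (v O) i) /\
  within_factor (pair_bound r) (z i) (greedy_z t (v O) i) /\
  within_factor (pair_bound r) (h i) (greedy_h t (v O) i) /\
  ((1 <= i)%nat -> within_factor (pair_bound r) (zp i) (greedy_zp t (v O) i)).
Proof.
  pose proof Hcp as (_ & _ & _ & _ & Hpos & Hposp).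
  intros Hi. set (a := v O).
  destruct (Hpos O (Nat.le_0_l r)) as (_ & Ha & _ & _ & _ & _ & _ & _ & _ & Hh0 & _).
  assert (Ha2 : 0 < a <= t ^ 2).
  { destruct (central_slacks O (Nat.le_0_l r)) as (_ & Hh & _). simpl in Hh. unfold a. lra. }
  assert (Hdom : forall k, let u' := trunc k (greedy_u t a) in let v' := trunc k (greedy_v t a) in
    u' i <= pair_bound r * u i /\ v' i <= pair_bound r * v i /\
    z_of t u' i <= pair_bound r * z i /\ h_of t u' v' i <= pair_bound r * h i /\
    ((1 <= i)%nat -> zp_of t u' v' i <= pair_bound r * zp i)).
  { intros k. apply central_dominates; auto.
    - apply admissible_trunc; [lra|]. apply greedy_admissible; auto.
    - unfold trunc; destruct (0 <? k)%nat; unfold greedy_v; simpl; fold a; lra. }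
  destruct (Hdom (S i)) as (Lu & Lv & _). rewrite !trunc_lt in Lu, Lv by lia.
  destruct (Hdom i) as (_ & _ & Lz & Lh & Lzp).
  destruct (greedy_slacks_trunc t a i) as (Ez & Eh & Ezp).
  rewrite Ez in Lz. rewrite Eh in Lh.
  destruct (central_le_greedy Ht i Hi) as [Uu Uv].
  destruct (central_slacks_le_greedy Ht i Hi) as (Uz & Uh & Uzp).
  destruct (Hpos i Hi) as (Hu & Hv & _ & _ & _ & _ & Hz & _ & _ & Hh & _).
  pose proof (pair_bound_ge1 r).
  refine (conj _ (conj _ (conj _ (conj _ _)))); try (apply within_factor_of_le; auto; fail).
  intros Hi1. destruct (Hposp i (conj Hi1 Hi)) as (Hzp & _).
  apply within_factor_of_le; auto. rewrite <- Ezp; auto.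
Qed.

(* Complementarity gives [mu <= v_0 (1 + y_{h_0})], while [y_{h_0} t^2] is part of the duality gap. *)
Lemma central_v0_within (Ht : 0 < t) :
  within_factor (pair_bound r + 1) (v O) (Rmin (t ^ 2) mu).
Proof.
  pose proof Hcp as (_ & _ & _ & Hdual & Hpos & Hposp).
  pose proof central_mu_pos as Hmu. pose proof central_duality_gap_le as Hgap.
  pose proof (pair_bound_ge1 r). set (N := pair_bound r) in *.
  destruct (Hpos O (Nat.le_0_l r)) as (_ & Hv & _ & Hsv & _ & Hvs & _ & Hyz & _ & Hh & Hyh & _).
  destruct (central_slacks O (Nat.le_0_l r)) as (_ & Hh0 & _). simpl in Hh0.
  assert (Hsv1 : sv O <= 1 + yh O).
  { destruct (Hdual O (Nat.le_0_l r)) as [_ ->]. simpl.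
    destruct (Nat.ltb_spec 0 r); [|lra].
    destruct (Hposp 1%nat ltac:(lia)) as (_ & Hyzp & _).
    destruct (Hpos 1%nat ltac:(lia)) as (_ & _ & _ & _ & _ & _ & _ & _ & _ & _ & Hyh1 & _).
    pose proof (coef_pos t 1). nra. }
  assert (Ht2 : 0 < t ^ 2) by (apply pow_lt; lra).
  assert (Hyh0 : yh O * t ^ 2 <= N * mu) by nra.
  assert (Hmu1 : mu <= v O + v O * yh O) by nra.
  assert (Hlow : mu * t ^ 2 <= v O * t ^ 2 + N * (v O * mu)) by nra.
  unfold Rmin; destruct Rle_dec; repeat split; nra.
Qed.

End CentralPoint.

Lemma theta_greedy (a : R -> R) lam : theta a (Rmin 2 lam) -> forall i,
  theta (fun t => greedy_u t (a t) i) (u_val lam i) /\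
  theta (fun t => greedy_v t (a t) i) (v_val lam i).
Proof.
  intros Ha i. induction i as [|i [IHu IHv]]; [split; [exact theta_id | exact Ha]|].
  split.
  - exact (theta_mult _ _ _ _ theta_id (theta_min _ _ _ _ IHu IHv)).
  - exact (theta_mult _ _ _ _ (theta_Rpower _) (theta_plus _ _ _ _ IHu IHv)).
Qed.

Lemma theta_greedy_slacks (a : R -> R) lam : theta a (Rmin 2 lam) -> forall i,
  theta (fun t => greedy_z t (a t) i) (z_val lam i) /\
  theta (fun t => greedy_h t (a t) i) (h_val lam i) /\
  theta (fun t => greedy_zp t (a t) i) (zp_val lam i).
Proof.
  intros Ha i. pose proof (theta_greedy a lam Ha) as Hg.
  split; [|split].
  - destruct i as [|m]; [exact theta_id|].
    exact (theta_mult _ _ _ _ theta_id (proj1 (Hg m))).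
  - destruct i as [|m]; [exact theta_sqr|]. exact (proj2 (Hg (S m))).
  - exact (theta_mult _ _ _ _ theta_id (proj2 (Hg (i - 1)%nat))).
Qed.

Section CentralPath.

Variables (r : nat) (lam : R) (u v z zp h yz yzp yh su sv : R -> nat -> R).
Hypothesis Hpath : eventually (fun t =>
  central_point r t (Rpower t lam)
    (u t) (v t) (z t) (zp t) (h t) (yz t) (yzp t) (yh t) (su t) (sv t)).

Lemma central_path_v0 : theta (fun t => v t O) (Rmin 2 lam).
Proof.
  apply (same_order_trans _ (fun t => Rmin (t ^ 2) (Rpower t lam))).
  - exists (pair_bound r + 1).
    exact (eventually_mono2 _ _ _ (fun t Ht Hc => central_v0_within _ _ _ _ _ _ _ _ _ _ _ _ _ Hc Ht)
      (eventually_gt 0) Hpath).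
  - exact (theta_min _ _ _ _ theta_sqr (theta_Rpower lam)).
Qed.

Lemma central_path_same_order i : (i <= r)%nat ->
  same_order (fun t => u t i) (fun t => greedy_u t (v t O) i) /\
  same_order (fun t => v t i) (fun t => greedy_v t (v t O) i) /\
  same_order (fun t => z t i) (fun t => greedy_z t (v t O) i) /\
  same_order (fun t => h t i) (fun t => greedy_h t (v t O) i) /\
  ((1 <= i)%nat -> same_order (fun t => zp t i) (fun t => greedy_zp t (v t O) i)).
Proof.
  intros Hi.
  assert (Hw := eventually_mono2 _ _ _
    (fun t Ht Hc => central_within_greedy _ _ _ _ _ _ _ _ _ _ _ _ _ Hc Ht i Hi)
    (eventually_gt 0) Hpath).
  repeat split; try intros Hi1; exists (pair_bound r); revert Hw; apply eventually_mono;
    intros t Hw; apply Hw; assumption.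
Qed.

End CentralPath.

Theorem mainTheorem13 (r : nat) (hr : (1 <= r)%nat) (lam : R)
  (u v z zp h yz yzp yh su sv : R -> nat -> R) :
  (exists T, forall t, T < t ->
     central_point r t (Rpower t lam)
       (u t) (v t) (z t) (zp t) (h t) (yz t) (yzp t) (yh t) (su t) (sv t)) ->
  (forall i, (i <= r)%nat ->
     has_val (fun t => u t i) (u_val lam i) /\
     has_val (fun t => v t i) (v_val lam i) /\
     has_val (fun t => z t i) (z_val lam i) /\
     has_val (fun t => h t i) (h_val lam i)) /\
  (forall i, (1 <= i <= r)%nat ->
     has_val (fun t => zp t i) (zp_val lam i)).
Proof.
  intros Hpath.
  pose proof (central_path_v0 r lam _ _ _ _ _ _ _ _ _ _ Hpath) as Hv0.
  pose proof (central_path_same_order r lam _ _ _ _ _ _ _ _ _ _ Hpath) as Hord.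
  split.
  - intros i Hi.
    destruct (Hord i Hi) as (Ou & Ov & Oz & Oh & _).
    destruct (theta_greedy _ _ Hv0 i) as [Tu Tv].
    destruct (theta_greedy_slacks _ _ Hv0 i) as (Tz & Th & _).
    repeat split; apply theta_has_val; eapply same_order_trans; eassumption.
  - intros i [Hi1 Hi].
    destruct (Hord i Hi) as (_ & _ & _ & _ & Ozp).
    destruct (theta_greedy_slacks _ _ Hv0 i) as (_ & _ & Tzp).
    apply theta_has_val. exact (same_order_trans _ _ _ (Ozp Hi1) Tzp).
Qed.
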